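(* Let $\mathcal X$ be a compact set in a normed space (dual norm $\|\cdot\|_*$), let $w_n>0$, and let each $l_n$ be differentiable and $\mu_n$-strongly convex for some $\mu_n\ge0$, with $\sum_{m=1}^nw_m\mu_m>0$ for all $n$. In round $n$ let $v_{n+1}$ be a differentiable (possibly nonconvex) function such that $\sum_{m=1}^nw_ml_m+w_{n+1}v_{n+1}$ is convex, and suppose the learner plays $x_{n+1}\in\operatorname{arg\,min}_{x\in\mathcal X}\big(\sum_{m=1}^nw_ml_m+w_{n+1}v_{n+1}\big)(x)$ (with $x_1\in\operatorname{arg\,min}_{\mathcal X}v_1$, $v_1$ convex). Then $$\mathrm{regret}^w(\mathcal X):=\sum_{n=1}^Nw_nl_n(x_n)-\min_{x\in\mathcal X}\sum_{n=1}^Nw_nl_n(x)\le\sum_{n=1}^N\frac{w_n^2\|\nabla l_n(x_n)-\nabla v_n(x_n)\|_*^2}{2\sum_{m=1}^nw_m\mu_m}.$$ In particular, if $\mu_n=\mu>0$ and $w_n=n^p$ with $p\ge0$, then $\mathrm{regret}^w(\mathcal X)\le\frac{p+1}{2\mu}\sum_{n=1}^Nn^{p-1}\|\nabla l_n(x_n)-\nabla v_n(x_n)\|_*^2$. *)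

From HB Require Import structures.
From mathcomp Require Import all_boot all_order all_algebra.
From mathcomp Require Import all_classical all_reals all_analysis.
Set Implicit Arguments. Unset Strict Implicit. Unset Printing Implicit Defensive.
Import Order.TTheory GRing.Theory Num.Theory.
Import numFieldNormedType.Exports.
Local Open Scope classical_set_scope.
Local Open Scope ring_scope.

Definition convex_in (R : realType) (V : normedModType R) (X : set V) :=
  forall x y t, X x -> X y -> 0 <= t <= 1 -> X (t *: x + (1 - t) *: y).

Definition strongly_convex_on (R : realType) (V : normedModType R)
  (X : set V) (mu : R) (f : V -> R) :=
  forall x y t, X x -> X y -> 0 <= t <= 1 ->
    f (t *: x + (1 - t) *: y) <=
      t * f x + (1 - t) * f y - mu / 2 * t * (1 - t) * `|x - y| ^+ 2.

Definition convex_on (R : realType) (V : normedModType R)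
  (X : set V) (f : V -> R) := strongly_convex_on X 0 f.

Definition dual_norm (R : realType) (V : normedModType R) (L : V -> R) : R :=
  sup [set `|L h| | h in [set h : V | `|h| <= 1]].

Definition is_argmin (R : realType) (V : normedModType R)
  (X : set V) (f : V -> R) (x : V) :=
  X x /\ forall y, X y -> f x <= f y.

Definition wregret (R : realType) (V : normedModType R) (X : set V)
  (w : nat -> R) (l : nat -> V -> R) (x : nat -> V) (N : nat) : R :=
  \sum_(1 <= n < N.+1) w n * l n (x n)
  - inf [set \sum_(1 <= n < N.+1) w n * l n y | y in X].

(* Let F_n := sum_(m <= n) w_m l_m, which is S_n-strongly convex for
   S_n := sum_(m <= n) w_m mu_m, and G_n := F_(n-1) + w_n v_n, which x_n
   minimises over X.  As F_n = G_n + w_n (l_n - v_n), moving from x_n towards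
   any z in X, optimality of x_n for G_n and strong convexity of F_n give
     F_n x_n - F_n z <= w_n D_n |z - x_n| - S_n / 2 |z - x_n|^2
                     <= w_n^2 D_n^2 / (2 S_n),
   where D_n is the dual norm of grad l_n (x_n) - grad v_n (x_n).  These
   "be-the-leader" gaps add up to a bound on the regret.  For mu_n = mu and
   w_n = n^p the second bound follows from n^(p+1) <= (p+1) sum_(m <= n) m^p,
   obtained by the mean value theorem one step at a time. *)

From HB Require Import structures.
From mathcomp Require Import all_boot all_order all_algebra.
From mathcomp Require Import all_classical all_reals all_analysis.
From mathcomp Require Import ring lra.
Import Order.TTheory GRing.Theory Num.Theory.
Import numFieldNormedType.Exports.
Local Open Scope classical_set_scope.
Local Open Scope ring_scope.

Section StronglyConvex.
Context {R : realType} {V : normedModType R}.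
Implicit Types (X : set V) (F G g : V -> R).

Lemma strongly_convex_on_sum X (I : eqType) (r : seq I) (w mu : I -> R)
    (f : I -> V -> R) :
  {in r, forall i, 0 <= w i} -> {in r, forall i, strongly_convex_on X (mu i) (f i)} ->
  strongly_convex_on X (\sum_(i <- r) w i * mu i) (fun y => \sum_(i <- r) w i * f i y).
Proof.
move=> w_ge0 scf x y t Xx Xy t01.
apply: (@le_trans _ _ (\sum_(i <- r) w i * (t * f i x + (1 - t) * f i y
   - mu i / 2 * t * (1 - t) * `|x - y| ^+ 2))).
  by rewrite big_seq [leRHS]big_seq; apply: ler_sum => i ri; rewrite ler_wpM2l ?w_ge0 ?scf.
rewrite !mulr_sumr !mulr_suml -!big_split -sumrB /=.
by apply: ler_sum => i _; rewrite le_eqVlt; apply/predU1P; left; ring.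
Qed.

Lemma differential_cvg_right {f : V -> R} {x h : V} : differentiable f x ->
  (fun t : R => t^-1 * (f (t *: h + x) - f x)) @ 0^'+ --> 'd f x h.
Proof.
move=> df; rewrite -deriveE //; apply: cvg_dnbhs_at_right.
exact: diff_derivable.
Qed.

(* Along the segment from [x] to [z], [g = F - G] grows no faster than [F],
   whose increments strong convexity controls; let [t -> 0+]. *)
Lemma strongly_convex_argmin_slope_le {X F G g} {S L : R} {x z : V} :
  convex_in X -> X x -> X z -> (forall y, X y -> G x <= G y) ->
  (forall y, F y = G y + g y) -> strongly_convex_on X S F ->
  (fun t : R => t^-1 * (g (t *: (z - x) + x) - g x)) @ 0^'+ --> L ->
  L <= F z - F x - S / 2 * `|z - x| ^+ 2.
Proof.
move=> cX Xx Xz Gmin FE scF slope.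
set K := F z - F x - S / 2 * `|z - x| ^+ 2.
have cvgK : (fun t : R => K + t * (S / 2 * `|z - x| ^+ 2)) @ 0^'+ -->
    K + 0 * (S / 2 * `|z - x| ^+ 2).
  by apply: cvg_at_right_filter; apply: cvgD; [exact: cvg_cst | apply: cvgMr_tmp].
rewrite mul0r addr0 in cvgK.
apply: (ler_cvg_to slope cvgK); near=> t.
have t_gt0 : 0 < t by near: t; exact: nbhs_right_gt.
have t_le1 : t <= 1 by near: t; exact: nbhs_right_le.
have yE : t *: (z - x) + x = t *: z + (1 - t) *: x.
  by rewrite scalerBr scalerBl scale1r addrCA addrC.
have t01 : 0 <= t <= 1 by rewrite ltW.
have Gy := Gmin _ (cX _ _ _ Xz Xx t01); rewrite -yE in Gy.
have Fy := scF _ _ _ Xz Xx t01; rewrite -yE in Fy.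
rewrite ler_pdivrMl // /K; move: Gy Fy; rewrite !FE; nra.
Unshelve. all: by end_near.
Qed.

Lemma mulr_sub_half_sqr_le (D u S : R) : 0 < S ->
  D * u - S / 2 * u ^+ 2 <= D ^+ 2 / (2 * S).
Proof.
move=> S_gt0; rewrite ler_pdivlMr ?mulr_gt0 //.
have : 0 <= (D - S * u) ^+ 2 by exact: sqr_ge0.
have -> : (D * u - S / 2 * u ^+ 2) * (2 * S) = D ^+ 2 - (D - S * u) ^+ 2.
  by field.
lra.
Qed.

Lemma strongly_convex_argmin_gap {X F G} {a b : V -> R} {S c D : R} {x z : V} :
  0 < S -> 0 <= c -> convex_in X -> X x -> X z ->
  (forall y, X y -> G x <= G y) -> (forall y, F y = G y + c * (a y - b y)) ->
  strongly_convex_on X S F -> differentiable a x -> differentiable b x ->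
  (forall h, `|'d a x h - 'd b x h| <= D * `|h|) ->
  F x - F z <= (c * D) ^+ 2 / (2 * S).
Proof.
move=> S_gt0 c_ge0 cX Xx Xz Gmin FE scF da db Dab.
pose g y := c * (a y - b y); set h := z - x.
have slope : (fun t : R => t^-1 * (g (t *: h + x) - g x)) @ 0^'+ -->
    c * ('d a x h - 'd b x h).
  have -> : (fun t : R => t^-1 * (g (t *: h + x) - g x)) = (fun t =>
      c * (t^-1 * (a (t *: h + x) - a x) - t^-1 * (b (t *: h + x) - b x))).
    by apply/funext => t; rewrite /g; ring.
  by apply: cvgMl_tmp; apply: cvgB; exact: differential_cvg_right.
have := strongly_convex_argmin_slope_le cX Xx Xz Gmin FE scF slope.
have : c * - ('d a x h - 'd b x h) <= c * (D * `|h|).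
  by rewrite ler_wpM2l // (le_trans _ (Dab h)) // -normrN ler_norm.
have := mulr_sub_half_sqr_le (c * D) `|h| _ S_gt0.
lra.
Qed.

End StronglyConvex.

Section DualNorm.
Context {R : realType} {V : normedModType R}.

Lemma differential_bounded {f : V -> R} {x} : differentiable f x ->
  exists2 r, 0 <= r & forall h, `|'d f x h| <= r * `|h|.
Proof.
move=> df; have c0 : {for 0, continuous ('d f x)} by exact: diff_continuous.
have := @continuous_linear_bounded R V R 0 ('d f x) c0.
by move=> /linear_boundedP /pinfty_ex_gt0 [r /ltW r_ge0 H]; exists r.
Qed.

Lemma le_dual_norm (L : V -> R) :
  (forall (k : R) h, L (k *: h) = k * L h) ->
  (exists2 r, 0 <= r & forall h, `|L h| <= r * `|h|) ->
  forall h, `|L h| <= dual_norm L * `|h|.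
Proof.
move=> LZ [r r_ge0 Lr] h.
have ubL : has_ubound [set `|L y| | y in [set y : V | `|y| <= 1]].
  by exists r => _ [y /= y1 <-]; rewrite (le_trans (Lr y)) // ler_piMr.
have [->|h0] := eqVneq h 0.
  by rewrite normr0 mulr0 -(scale0r 0) LZ mul0r normr0.
have := ub_le_sup ubL (ex_intro2 _ _ (`|h|^-1 *: h) _ erefl).
rewrite /= normfZV // => /(_ (lexx 1)).
by rewrite LZ normrM normfV normr_id mulrC -ler_pdivrMr ?normr_gt0.
Qed.

Lemma le_dual_norm_diffB (f f' : V -> R) x h :
  differentiable f x -> differentiable f' x ->
  `|'d f x h - 'd f' x h| <= dual_norm (fun h => 'd f x h - 'd f' x h) * `|h|.
Proof.
move=> df df'; apply: le_dual_norm => [k y|].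
  by rewrite !linearZ /= scalerN mulrBr.
have [r1 r1_ge0 B1] := differential_bounded df.
have [r2 r2_ge0 B2] := differential_bounded df'.
exists (r1 + r2) => [|y]; first exact: addr_ge0.
by rewrite mulrDl (le_trans (ler_normB _ _)) // lerD.
Qed.

End DualNorm.

Section WeightedRegret.
Context {R : realType} {V : normedModType R}.
Implicit Types (X : set V).

Lemma wregret_le_sum_gap {X} {w : nat -> R} {l : nat -> V -> R} {x : nat -> V}
    {B : nat -> R} {N} :
  X !=set0 -> (forall n, (1 <= n <= N)%N -> X (x n)) ->
  (forall n, (1 <= n <= N)%N -> forall z, X z ->
     \sum_(1 <= m < n.+1) w m * l m (x n) - \sum_(1 <= m < n.+1) w m * l m z <= B n) ->
  wregret X w l x N <= \sum_(1 <= n < N.+1) B n.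
Proof.
move=> [z0 Xz0] Xx gap.
have cumulative_gap k : (k <= N)%N -> forall z, X z ->
    \sum_(1 <= n < k.+1) w n * l n (x n) - \sum_(1 <= m < k.+1) w m * l m z
    <= \sum_(1 <= n < k.+1) B n.
  elim: k => [|k IH] kN z Xz; first by rewrite !big_geq // subrr.
  have kN' : (1 <= k.+1 <= N)%N by [].
  have := IH (ltnW kN) _ (Xx _ kN'); have := gap _ kN' z Xz.
  rewrite !(big_nat_recr k.+1) //=; lra.
rewrite /wregret lerBlDl -lerBlDr.
apply: lb_le_inf => [|_ [z Xz <-]]; first by exists (\sum_(1 <= n < N.+1) w n * l n z0), z0.
by rewrite lerBlDr -lerBlDl; exact: cumulative_gap.
Qed.

Lemma optimistic_leader_gap {X} {w mu : nat -> R} {l v : nat -> V -> R} {n : nat}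
    {xn z : V} :
  (0 < n)%N -> convex_in X -> X z ->
  (forall m, (1 <= m <= n)%N -> 0 <= w m) ->
  (forall m, (1 <= m <= n)%N -> strongly_convex_on X (mu m) (l m)) ->
  0 < \sum_(1 <= m < n.+1) w m * mu m ->
  differentiable (l n) xn -> differentiable (v n) xn ->
  is_argmin X (fun y => \sum_(1 <= m < n) w m * l m y + w n * v n y) xn ->
  \sum_(1 <= m < n.+1) w m * l m xn - \sum_(1 <= m < n.+1) w m * l m z <=
  w n ^+ 2 * dual_norm (fun h => 'd (l n) xn h - 'd (v n) xn h) ^+ 2
    / (2 * \sum_(1 <= m < n.+1) w m * mu m).
Proof.
move=> n_gt0 cX Xz w_ge0 scl S_gt0 dl dv [Xn minn]; rewrite -exprMn.
apply: (strongly_convex_argmin_gap (F := fun y => \sum_(1 <= m < n.+1) w m * l m y)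
  S_gt0 _ cX Xn Xz minn _ _ dl dv).
- by rewrite w_ge0 // n_gt0 /=.
- by move=> y; rewrite big_nat_recr //=; ring.
- by apply: strongly_convex_on_sum => m; rewrite mem_index_iota ltnS; [exact: w_ge0 | exact: scl].
- by move=> h; exact: le_dual_norm_diffB.
Qed.

End WeightedRegret.

Section PowerSums.
Context {R : realType}.

Lemma powR_succ_sub_le (p : R) (n : nat) : 0 <= p ->
  n.+1%:R `^ (p + 1) - n%:R `^ (p + 1) <= (p + 1) * n.+1%:R `^ p.
Proof.
move=> p_ge0; have p1_gt0 : 0 < p + 1 by lra.
case: n => [|n].
  rewrite powR0 ?gt_eqF // subr0 !powR1 mulr1; lra.
set a : R := n.+1%:R; set b : R := n.+2%:R.
have a_gt0 : 0 < a by rewrite ltr0n.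
have bE : b = a + 1 by rewrite /a /b -addn1 natrD.
have ab : a < b by lra.
have der y : y \in `]a, b[ ->
    is_derive y 1 (fun y => y `^ (p + 1)) ((p + 1) * y `^ (p + 1 - 1)).
  by rewrite in_itv /= => /andP[ay _]; apply: is_derive1_powR; lra.
have cont : {within `[a, b], continuous (fun y : R => y `^ (p + 1))}.
  apply: continuous_in_subspaceT => y; rewrite inE /= in_itv /= => /andP[ay _].
  apply/differentiable_continuous/derivable1_diffP.
  by apply: derivable_powR; rewrite in_itv /= andbT; lra.
have [c + ->] := MVT ab der cont; rewrite in_itv /= => /andP[ac cb].
rewrite addrK bE addrAC subrr add0r mulr1 ler_pM2l //.
by apply: ge0_ler_powR; rewrite ?nnegrE; lra.
Qed.

Lemma powR_le_sum (p : R) (n : nat) : 0 <= p ->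
  n%:R `^ (p + 1) <= (p + 1) * \sum_(1 <= m < n.+1) m%:R `^ p.
Proof.
move=> p_ge0; elim: n => [|n IH].
  by rewrite big_geq // mulr0 powR0 // gt_eqF //; lra.
rewrite big_nat_recr //= mulrDr; have := powR_succ_sub_le p n p_ge0; lra.
Qed.

Lemma pow_weight_ratio_le (mu0 p D : R) (n : nat) : 0 < mu0 -> 0 <= p -> (0 < n)%N ->
  (n%:R `^ p) ^+ 2 * D ^+ 2 / (2 * \sum_(1 <= m < n.+1) m%:R `^ p * mu0) <=
  (p + 1) / (2 * mu0) * (n%:R `^ (p - 1) * D ^+ 2).
Proof.
move=> mu0_gt0 p_ge0 n_gt0.
rewrite -mulr_suml; set T := \sum_(1 <= m < n.+1) _.
have n_gt0' : 0 < n%:R :> R by rewrite ltr0n.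
have lbT := powR_le_sum p n p_ge0; rewrite -/T in lbT.
have T_gt0 : 0 < T.
  have : 0 < n%:R `^ (p + 1) by rewrite powR_gt0.
  nra.
have sqE : (n%:R `^ p) ^+ 2 = n%:R `^ (p + 1) * n%:R `^ (p - 1).
  rewrite expr2 -!powRD ?(gt_eqF n_gt0') ?implybT //; congr powR; ring.
rewrite ler_pdivrMr ?mulr_gt0 //.
have -> : (p + 1) / (2 * mu0) * (n%:R `^ (p - 1) * D ^+ 2) * (2 * (T * mu0)) =
    (p + 1) * T * (n%:R `^ (p - 1) * D ^+ 2) by field; rewrite gt_eqF.
by rewrite sqE -mulrA ler_wpM2r // mulr_ge0 ?powR_ge0 ?sqr_ge0.
Qed.

End PowerSums.

Theorem lemma17 (R : realType) (V : normedModType R) (X : set V)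
  (N : nat) (w mu : nat -> R) (l v : nat -> V -> R) (x : nat -> V) :
  compact X -> convex_in X ->
  (forall n, (1 <= n <= N)%N -> 0 < w n) ->
  (forall n, (1 <= n <= N)%N -> 0 <= mu n) ->
  (forall n, (1 <= n <= N)%N -> forall y : V, differentiable (l n) y) ->
  (forall n, (1 <= n <= N)%N -> strongly_convex_on X (mu n) (l n)) ->
  (forall n, (1 <= n <= N)%N -> 0 < \sum_(1 <= m < n.+1) w m * mu m) ->
  (forall n, (1 <= n <= N)%N -> forall y : V, differentiable (v n) y) ->
  convex_on X (v 1%N) ->
  is_argmin X (v 1%N) (x 1%N) ->
  (forall n, (1 <= n < N)%N ->
     convex_on X (fun y => \sum_(1 <= m < n.+1) w m * l m y + w n.+1 * v n.+1 y)
     /\ is_argmin X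
          (fun y => \sum_(1 <= m < n.+1) w m * l m y + w n.+1 * v n.+1 y)
          (x n.+1)) ->
  wregret X w l x N <=
    \sum_(1 <= n < N.+1)
       (w n ^+ 2 * dual_norm (fun h => 'd (l n) (x n) h - 'd (v n) (x n) h) ^+ 2)
       / (2 * \sum_(1 <= m < n.+1) w m * mu m)
  /\
  (forall (mu0 p : R), 0 < mu0 -> 0 <= p ->
     (forall n, (1 <= n <= N)%N -> mu n = mu0) ->
     (forall n, (1 <= n <= N)%N -> w n = n%:R `^ p) ->
     wregret X w l x N <=
       (p + 1) / (2 * mu0) *
       \sum_(1 <= n < N.+1)
          (n%:R `^ (p - 1) *
           dual_norm (fun h => 'd (l n) (x n) h - 'd (v n) (x n) h) ^+ 2)).
Proof.
(* Compactness of [X] and convexity of the objectives only guarantee that the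
   minimisers exist, and [0 <= mu n] is subsumed by [0 < S_n]. *)
move=> _ cX w_gt0 _ dl scl S_gt0 dv _ x1_min xn_min.
have leader_min n : (1 <= n <= N)%N ->
    is_argmin X (fun y => \sum_(1 <= m < n) w m * l m y + w n * v n y) (x n).
  case: n => [//|[|n]] nN; last by have [_] := xn_min n.+1 nN.
  have [X1 min1] := x1_min; split=> // y Xy.
  by rewrite !big_geq // !add0r ler_pM2l ?w_gt0 ?min1.
pose B n := w n ^+ 2 * dual_norm (fun h => 'd (l n) (x n) h - 'd (v n) (x n) h) ^+ 2
  / (2 * \sum_(1 <= m < n.+1) w m * mu m).
have gap n : (1 <= n <= N)%N -> forall z, X z ->
    \sum_(1 <= m < n.+1) w m * l m (x n) - \sum_(1 <= m < n.+1) w m * l m z <= B n.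
  move=> /[dup] nN /andP[n_gt0 n_leN] z Xz.
  have le_N m : (1 <= m <= n)%N -> (1 <= m <= N)%N.
    by case/andP=> m_gt0 mn; rewrite m_gt0 (leq_trans mn n_leN).
  apply: (optimistic_leader_gap n_gt0 cX Xz _ _ (S_gt0 n nN) (dl n nN _) (dv n nN _)
    (leader_min n nN)) => m /le_N mN; [exact: ltW (w_gt0 m mN) | exact: scl].
have part1 : wregret X w l x N <= \sum_(1 <= n < N.+1) B n.
  apply: wregret_le_sum_gap gap; first by exists (x 1%N); case: x1_min.
  by move=> n /leader_min [].
split=> // mu0 p mu0_gt0 p_ge0 mu_eq w_eq.
apply: (le_trans part1); rewrite mulr_sumr; apply: ler_sum_nat => n /andP[n_gt0 n_ltN].
have nN : (1 <= n <= N)%N by rewrite n_gt0 -ltnS.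
rewrite /B; have -> : \sum_(1 <= m < n.+1) w m * mu m = \sum_(1 <= m < n.+1) m%:R `^ p * mu0.
  apply: eq_big_nat => m /andP[m_gt0 mn].
  by rewrite w_eq ?mu_eq // m_gt0 -ltnS (leq_trans mn n_ltN).
by rewrite w_eq // pow_weight_ratio_le.
Qed.
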